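(* Let $P$ be atomic. The sequent $\supset \Box(P\land\lnot\Box P\to P)\to\lnot\Box(P\land\lnot\Box P)$ has no prehistoric-cycle-free G3s proof.
   Context: S4 formulas built from atoms, $\bot$, $\to$, $\Box$, with $\lnot$ and $\land$ (handled either as abbreviations or by the standard G3 rules: $(\lnot\supset)$ from $\Gamma\supset\Delta,A$ infer $\lnot A,\Gamma\supset\Delta$; $(\supset\lnot)$ from $A,\Gamma\supset\Delta$ infer $\Gamma\supset\Delta,\lnot A$; $(\land\supset)$ from $A,B,\Gamma\supset\Delta$ infer $A\land B,\Gamma\supset\Delta$; $(\supset\land)$ from $\Gamma\supset\Delta,A$ and $\Gamma\supset\Delta,B$ infer $\Gamma\supset\Delta,A\land B$). Sequents use finite multisets; $\Box\Gamma:=\{\Box C\mid C\in\Gamma\}$. G3s rules: (Ax) $P,\Gamma\supset\Delta,P$ ($P$ atomic); $(\bot\supset)$ $\bot,\Gamma\supset\Delta$; $(\to\supset)$ from $\Gamma\supset\Delta,A$ and $B,\Gamma\supset\Delta$ infer $A\to B,\Gamma\supset\Delta$; $(\supset\to)$ from $A,\Gamma\supset\Delta,B$ infer $\Gamma\supset\Delta,A\to B$; $(\Box\supset)$ from $A,\Box A,\Gamma\supset\Delta$ infer $\Box A,\Gamma\supset\Delta$; $(\supset\Box)$ from $\Box\Gamma\supset A$ infer $\Gamma',\Box\Gamma\supset\Delta',\Box A$. Correspondence: a symbol occurrence in a side formula (formula repeated unchanged from premise to conclusion) of a premise directly corresponds to the same occurrence in the conclusion; an active formula of a premise directly corresponds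 to its topmost occurrence as a subformula of the principal formula, symbolwise. Families are equivalence classes of $\Box$-occurrences under the reflexive-symmetric-transitive closure. $i\prec j$ if some $(\supset\Box)$ rule whose principal formula $\Box A$ has outermost $\Box$ in family $j$ has a premise containing a $\Box$ of family $i$. A prehistoric cycle is $i_0\prec\cdots\prec i_{n-1}\prec i_0$ ($n\ge1$); a proof is prehistoric-cycle-free if it has none. (Equivalently, in cut-free G3s proofs, one may restrict to families having an occurrence introduced as principal $\Box$ of a $(\supset\Box)$ rule.) *)

From Stdlib Require Import List Arith Relations.
Import ListNotations.

Inductive form : Type :=
| Atom (n : nat)
| Bot
| Imp (A B : form)
| Box (A : form)
| Neg (A : form)
| And (A B : form).

(** Sequents Gamma ⊃ Delta: finite multisets, represented by lists.
    The principal formula of a rule is designated by its index. *)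
Definition sequent := (list form * list form)%type.

Definition rem {T} (i : nat) (l : list T) : list T := firstn i l ++ skipn (S i) l.

(** Index in the list before removal of the i-th element. *)
Definition unrem (i n : nat) : nat := if n <? i then n else S n.

(** Rule applications.  [i] indexes the antecedent, [j] the succedent.
    In [RBoxR j sel], [sel] lists the (distinct) antecedent indices of the
    boxed formulas Box Gamma kept in the premise; all others form Gamma'. *)
Inductive rule : Type :=
| RAx (i j : nat)
| RBotL (i : nat)
| RImpL (i : nat)
| RImpR (j : nat)
| RBoxL (i : nat)
| RBoxR (j : nat) (sel : list nat)
| RNegL (i : nat)
| RNegR (j : nat)
| RAndL (i : nat)
| RAndR (j : nat).

(** Premises of a rule applied to the conclusion G ⊃ D (None: not applicable).
    Premises are put in a canonical order (active formulas in front of the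
    antecedent / at the end of the succedent). *)
Definition rule_premises (G D : list form) (r : rule) : option (list sequent) :=
  match r with
  | RAx i j =>
      match nth_error G i, nth_error D j with
      | Some (Atom a), Some (Atom b) => if Nat.eqb a b then Some [] else None
      | _, _ => None
      end
  | RBotL i =>
      match nth_error G i with Some Bot => Some [] | _ => None end
  | RImpL i =>
      match nth_error G i with
      | Some (Imp A B) => Some [(rem i G, D ++ [A]); (B :: rem i G, D)]
      | _ => None end
  | RImpR j =>
      match nth_error D j with
      | Some (Imp A B) => Some [(A :: G, rem j D ++ [B])]
      | _ => None end
  | RBoxL i =>
      match nth_error G i with
      | Some (Box A) => Some [(A :: G, D)]
      | _ => None end
  | RBoxR j sel =>
      match nth_error D j with
      | Some (Box A) => Some [(map (fun s => nth s G Bot) sel, [A])]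
      | _ => None end
  | RNegL i =>
      match nth_error G i with
      | Some (Neg A) => Some [(rem i G, D ++ [A])]
      | _ => None end
  | RNegR j =>
      match nth_error D j with
      | Some (Neg A) => Some [(A :: G, rem j D)]
      | _ => None end
  | RAndL i =>
      match nth_error G i with
      | Some (And A B) => Some [(A :: B :: rem i G, D)]
      | _ => None end
  | RAndR j =>
      match nth_error D j with
      | Some (And A B) => Some [(G, rem j D ++ [A]); (G, rem j D ++ [B])]
      | _ => None end
  end.

Definition side_ok (G : list form) (r : rule) : Prop :=
  match r with
  | RBoxR _ sel =>
      NoDup sel /\ Forall (fun s => exists B, nth_error G s = Some (Box B)) sel
  | _ => True
  end.

Inductive proof : Type :=
| PNode (G D : list form) (r : rule) (subs : list proof).

Definition concl (pf : proof) : sequent :=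
  match pf with PNode G D _ _ => (G, D) end.

Inductive valid : proof -> Prop :=
| valid_node G D r subs ps :
    rule_premises G D r = Some ps ->
    side_ok G r ->
    map concl subs = ps ->
    (forall q, In q subs -> valid q) ->
    valid (PNode G D r subs).

Fixpoint subproof (pf : proof) (a : list nat) : option proof :=
  match a with
  | [] => Some pf
  | k :: a' =>
      match pf with
      | PNode _ _ _ subs =>
          match nth_error subs k with
          | Some q => subproof q a'
          | None => None
          end
      end
  end.

(** Subformula at a path (0 = left/only immediate subformula, 1 = right). *)
Fixpoint subf (A : form) (p : list nat) : option form :=
  match p with
  | [] => Some A
  | k :: p' =>
      match A, k with
      | Imp B _, 0 => subf B p'
      | Imp _ C, 1 => subf C p'
      | Box B, 0 => subf B p'
      | Neg B, 0 => subf B p'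
      | And B _, 0 => subf B p'
      | And _ C, 1 => subf C p'
      | _, _ => None
      end
  end.

(** A symbol location: node address, side (true = antecedent,
    false = succedent), index of the formula occurrence in that side,
    path to the symbol (its subformula) inside the formula. *)
Definition loc := (list nat * bool * nat * list nat)%type.

Definition formula_at (pf : proof) (l : loc) : option form :=
  match l with
  | (a, s, n, p) =>
      match subproof pf a with
      | Some (PNode G D _ _) =>
          match nth_error (if s then G else D) n with
          | Some A => subf A p
          | None => None
          end
      | None => None
      end
  end.

Definition is_box_occ (pf : proof) (l : loc) : Prop :=
  exists B, formula_at pf l = Some (Box B).

(** Direct correspondence: a symbol at (side s, index n, path p) in premise
    number k of a rule [r] with conclusion G ⊃ D corresponds to the returned
    location in the conclusion.  Side formulas correspond to themselves;
    active formulas to their occurrence as subformula of the principal one. *)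
Definition corr (G D : list form) (r : rule) (k : nat)
  (s : bool) (n : nat) (p : list nat) : option (bool * nat * list nat) :=
  match r with
  | RAx _ _ | RBotL _ => None
  | RImpL i =>
      match k with
      | 0 => if s then Some (true, unrem i n, p)
             else if n <? length D then Some (false, n, p)
             else Some (true, i, 0 :: p)
      | _ => if s then match n with
                       | 0 => Some (true, i, 1 :: p)
                       | S m => Some (true, unrem i m, p)
                       end
             else Some (false, n, p)
      end
  | RImpR j =>
      if s then match n with
                | 0 => Some (false, j, 0 :: p)
                | S m => Some (true, m, p)
                end
      else if n <? length D - 1 then Some (false, unrem j n, p)
      else Some (false, j, 1 :: p)
  | RBoxL i =>
      if s then match n with
                | 0 => Some (true, i, 0 :: p)
                | S m => Some (true, m, p)
                end
      else Some (false, n, p)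
  | RBoxR j sel =>
      if s then Some (true, nth n sel 0, p) else Some (false, j, 0 :: p)
  | RNegL i =>
      if s then Some (true, unrem i n, p)
      else if n <? length D then Some (false, n, p)
      else Some (true, i, 0 :: p)
  | RNegR j =>
      if s then match n with
                | 0 => Some (false, j, 0 :: p)
                | S m => Some (true, m, p)
                end
      else Some (false, unrem j n, p)
  | RAndL i =>
      if s then match n with
                | 0 => Some (true, i, 0 :: p)
                | 1 => Some (true, i, 1 :: p)
                | S (S m) => Some (true, unrem i m, p)
                end
      else Some (false, n, p)
  | RAndR j =>
      if s then Some (true, n, p)
      else if n <? length D - 1 then Some (false, unrem j n, p)
      else Some (false, j, (match k with 0 => 0 | _ => 1 end) :: p)
  end.

Definition dcorr (pf : proof) (l1 l2 : loc) : Prop :=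
  is_box_occ pf l1 /\ is_box_occ pf l2 /\
  exists a k s n p G D r subs s' n' p',
    l1 = (a ++ [k], s, n, p) /\ l2 = (a, s', n', p') /\
    subproof pf a = Some (PNode G D r subs) /\
    corr G D r k s n p = Some (s', n', p').

Definition same_family (pf : proof) : relation loc :=
  clos_refl_sym_trans loc (dcorr pf).

(** [prec pf l1 l2]: family of l1 ≺ family of l2, i.e. some (⊃□) rule whose
    principal □ is in the family of l2 has a premise containing a □ in the
    family of l1. *)
Definition prec (pf : proof) (l1 l2 : loc) : Prop :=
  is_box_occ pf l1 /\ is_box_occ pf l2 /\
  exists a j sel G D subs s n p,
    subproof pf a = Some (PNode G D (RBoxR j sel) subs) /\
    same_family pf l2 (a, false, j, []) /\
    is_box_occ pf (a ++ [0], s, n, p) /\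
    same_family pf l1 (a ++ [0], s, n, p).

Definition has_prehistoric_cycle (pf : proof) : Prop :=
  exists l, is_box_occ pf l /\ clos_trans loc (prec pf) l l.

Definition prehistoric_cycle_free (pf : proof) : Prop :=
  ~ has_prehistoric_cycle pf.

Definition target (P : nat) : form :=
  Imp (Box (Imp (And (Atom P) (Neg (Box (Atom P)))) (Atom P)))
      (Neg (Box (And (Atom P) (Neg (Box (Atom P)))))).

From Stdlib Require Import List Arith Lia Relations Bool Btauto.
Import ListNotations.

(** The argument is semantic.  Take the S4 model with a root world [false]
    seeing a second world [true] (atoms hold only at the root), and evaluate
    formulas in it as usual, except that a boxed conjunction □(A ∧ B) is read
    as A ∧ B.  Under this reading every G3s rule preserves truth at all
    worlds, except that (⊃□) may fail when one of its selected context
    formulas is a boxed conjunction; call a proof clean if it has no such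
    (⊃□) step.  Clean proofs are sound, and the end-sequent is refuted at the
    root, so it has no clean proof.

    Conversely, following the correspondence relation from any rule down to
    the end-sequent shows that in a proof of this end-sequent every principal
    □ of a (⊃□) lies in the family of the □P inside ¬□(P ∧ ¬□P) (the only
    positive □), while every boxed conjunction descends from □(P ∧ ¬□P)
    itself, whose inner □P is that same occurrence.  Hence an unclean (⊃□)
    step makes this family precede itself: a prehistoric cycle of length 1. *)

Lemma rem_split {T} (l1 l2 : list T) x : rem (length l1) (l1 ++ x :: l2) = l1 ++ l2.
Proof.
  unfold rem. rewrite firstn_app, Nat.sub_diag, firstn_all, app_nil_r.
  f_equal. induction l1; simpl; auto.
Qed.

(** Boolean quantifiers over a list split off an element at a known position;
    this is how a principal formula is separated from its context. *)
Lemma forallb_rem {T} (f : T -> bool) i l x :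
  nth_error l i = Some x -> forallb f l = f x && forallb f (rem i l).
Proof.
  intro E. destruct (nth_error_split l i E) as [l1 [l2 [-> <-]]].
  rewrite rem_split, !forallb_app. simpl. btauto.
Qed.

Lemma existsb_rem {T} (f : T -> bool) i l x :
  nth_error l i = Some x -> existsb f l = f x || existsb f (rem i l).
Proof.
  intro E. destruct (nth_error_split l i E) as [l1 [l2 [-> <-]]].
  rewrite rem_split, !existsb_app. simpl. btauto.
Qed.

Lemma nth_error_rem {T} i (l : list T) m : nth_error (rem i l) m = nth_error l (unrem i m).
Proof.
  unfold rem, unrem. destruct (Nat.ltb_spec m i);
    destruct (Nat.lt_ge_cases i (length l)).
  - rewrite nth_error_app1, nth_error_firstn by (rewrite length_firstn; lia).
    destruct (Nat.ltb_spec m i); [reflexivity | lia].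
  - now rewrite firstn_all2, skipn_all2, app_nil_r by lia.
  - rewrite nth_error_app2, nth_error_skipn; rewrite length_firstn; [f_equal | ]; lia.
  - rewrite firstn_all2, skipn_all2, app_nil_r by lia.
    now rewrite !(proj2 (nth_error_None l _)) by lia.
Qed.

Lemma length_rem {T} i (l : list T) : i < length l -> length (rem i l) = length l - 1.
Proof. intro H. unfold rem. rewrite length_app, length_firstn, length_skipn. lia. Qed.

Lemma nth_error_app_last {T} (l : list T) x n y : nth_error (l ++ [x]) n = Some y ->
  (n < length l /\ nth_error l n = Some y) \/ (n = length l /\ y = x).
Proof.
  intro H. destruct (Nat.lt_ge_cases n (length l)).
  - left. rewrite nth_error_app1 in H; auto.
  - right. rewrite nth_error_app2 in H by auto.
    destruct (n - length l) eqn:E; simpl in H.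
    + injection H as ->. split; [lia | reflexivity].
    + destruct n0; discriminate.
Qed.

(** Worlds are booleans: the root [false] sees itself and [true],
    which sees only itself; atoms hold exactly at the root.  A boxed
    conjunction is read as the conjunction itself, any other box as the S4
    box of this reflexive-transitive frame. *)
Definition is_and (A : form) : bool := match A with And _ _ => true | _ => false end.

Fixpoint eval (w : bool) (F : form) : bool :=
  match F with
  | Atom _ => negb w
  | Bot => false
  | Imp A B => implb (eval w A) (eval w B)
  | Box A => if is_and A then eval w A else eval w A && (w || eval true A)
  | Neg A => negb (eval w A)
  | And A B => eval w A && eval w B
  end.

Lemma box_persistent B :
  is_and B = false -> eval false (Box B) = true -> eval true (Box B) = true.
Proof. simpl. intros ->. rewrite !andb_true_iff. tauto. Qed.

Definition sat (w : bool) (sq : sequent) : bool :=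
  implb (forallb (eval w) (fst sq)) (existsb (eval w) (snd sq)).

Definition clean (G D : list form) (r : rule) : Prop :=
  match r with
  | RBoxR j sel =>
      forall t B, In t sel -> nth t G Bot = Box B -> is_and B = false
  | _ => True
  end.

(** Close a goal that is a propositional consequence of the hypotheses in the
    truth values of formulas and contexts. *)
Ltac bool_cases :=
  repeat match goal with
  | H : context [eval ?w ?X] |- _ => is_var X; destruct (eval w X)
  | H : context [forallb ?f ?l] |- _ => destruct (forallb f l)
  | H : context [existsb ?f ?l] |- _ => destruct (existsb f l)
  | H : context [is_and ?X] |- _ => destruct (is_and X)
  | |- context [eval ?w ?X] => is_var X; destruct (eval w X)
  | |- context [forallb ?f ?l] => destruct (forallb f l)
  | |- context [existsb ?f ?l] => destruct (existsb f l)
  | |- context [is_and ?X] => destruct (is_and X)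
  end;
  repeat match goal with b : bool |- _ => destruct b end; simpl in *; congruence.

(** Unfold [Hr : rule_premises G D r = Some ps]: name the principal formula
    and replace [ps] by the explicit list of premises. *)
Ltac open_rule Hr :=
  simpl in Hr;
  repeat match type of Hr with
  | context [nth_error ?l ?i] =>
      let E := fresh "E" in destruct (nth_error l i) as [[]|] eqn:E; try discriminate
  end;
  try match type of Hr with
  | context [Nat.eqb ?a ?b] => destruct (Nat.eqb_spec a b); [subst | discriminate]
  end;
  injection Hr as <-.

Lemma local_rule_sound G D r ps w :
  rule_premises G D r = Some ps -> (forall j sel, r <> RBoxR j sel) ->
  (forall c, In c ps -> sat w c = true) -> sat w (G, D) = true.
Proof.
  intros Hr HnotBoxR Hprem. unfold sat in *; simpl.
  destruct r; try (exfalso; now eapply HnotBoxR); open_rule Hr;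
    try pose proof (Hprem _ (or_introl eq_refl));
    try pose proof (Hprem _ (or_intror (or_introl eq_refl))); simpl in *;
    rewrite ?existsb_app in *;
    repeat match goal with
    | E : nth_error G _ = Some _ |- _ => rewrite (forallb_rem _ _ _ _ E) in *
    | E : nth_error D _ = Some _ |- _ => rewrite (existsb_rem _ _ _ _ E) in *
    end;
    simpl in *; bool_cases.
Qed.

Lemma selected_in_context G j sel x :
  side_ok G (RBoxR j sel) -> In x (map (fun s => nth s G Bot) sel) ->
  exists t B, In t sel /\ x = Box B /\ nth t G Bot = Box B /\ In x G.
Proof.
  intros [_ Hbox] Hx. apply in_map_iff in Hx as [t [<- Ht]].
  rewrite Forall_forall in Hbox. destruct (Hbox t Ht) as [B EB].
  pose proof (nth_error_nth G t Bot EB) as Et. rewrite Et.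
  exists t, B. repeat split; auto. eapply nth_error_In; eauto.
Qed.

(** A clean (⊃□) step preserves validity in the model: at the root, the
    selected boxes transfer to the other world by persistence. *)
Lemma box_rule_sound G D j sel ps w :
  rule_premises G D (RBoxR j sel) = Some ps -> side_ok G (RBoxR j sel) ->
  clean G D (RBoxR j sel) -> (forall c w', In c ps -> sat w' c = true) ->
  sat w (G, D) = true.
Proof.
  intros Hr Hside Hclean Hprem. simpl in Hr.
  destruct (nth_error D j) as [[| | |A| |]|] eqn:Ej; try discriminate.
  injection Hr as <-.
  assert (premise : forall w',
            forallb (eval w') (map (fun s => nth s G Bot) sel) = true -> eval w' A = true).
  { intros w' HS. specialize (Hprem _ w' (or_introl eq_refl)). unfold sat in Hprem.
    simpl in Hprem. rewrite HS in Hprem. simpl in Hprem. now rewrite orb_false_r in Hprem. }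
  unfold sat; simpl. rewrite (existsb_rem _ _ _ _ Ej).
  destruct (forallb (eval w) G) eqn:HG; [|reflexivity].
  rewrite forallb_forall in HG.
  assert (HA : eval w A = true).
  { apply premise, forallb_forall. intros x Hx.
    destruct (selected_in_context _ _ _ _ Hside Hx) as [t [B [_ [_ [_ HxG]]]]]. auto. }
  simpl. rewrite HA. destruct (is_and A); [reflexivity|].
  destruct w; [reflexivity|]. simpl.
  rewrite premise; [reflexivity|]. apply forallb_forall. intros x Hx.
  destruct (selected_in_context _ _ _ _ Hside Hx) as [t [B [Ht [-> [Et HxG]]]]].
  apply box_persistent; auto. eapply Hclean; eauto.
Qed.

Lemma clean_rule_sound G D r ps w :
  rule_premises G D r = Some ps -> side_ok G r -> clean G D r ->
  (forall c w', In c ps -> sat w' c = true) -> sat w (G, D) = true.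
Proof.
  intros Hr Hside Hclean Hprem. destruct r;
    try (eapply local_rule_sound; [eassumption | discriminate | auto]).
  eapply box_rule_sound; eassumption.
Qed.

Definition rules_clean (pf : proof) : Prop :=
  forall a G D r subs, subproof pf a = Some (PNode G D r subs) -> clean G D r.

Lemma clean_proof_sound pf w : valid pf -> rules_clean pf -> sat w (concl pf) = true.
Proof.
  intros Hv. revert w. induction Hv as [G D r subs ps Hr Hside Hconcl Hsub IH].
  intros w Hclean. apply (clean_rule_sound G D r ps w Hr Hside).
  - exact (Hclean [] G D r subs eq_refl).
  - intros c w' Hc. subst ps. apply in_map_iff in Hc as [q [<- Hq]].
    apply IH; auto. intros a G' D' r' subs' Ha.
    destruct (In_nth_error _ _ Hq) as [k Ek].
    apply (Hclean (k :: a) G' D' r' subs'). simpl. now rewrite Ek.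
Qed.

Lemma target_refuted P : sat false ([], [target P]) = false.
Proof. reflexivity. Qed.

(** [polarity F p b]: the side (true = antecedent) on which the subformula of
    [F] at path [p] would occur if [F] itself occurs on side [b]. *)
Fixpoint polarity (F : form) (p : list nat) (b : bool) {struct p} : bool :=
  match p with
  | [] => b
  | k :: p' =>
      match F, k with
      | Imp B _, 0 => polarity B p' (negb b)
      | Imp _ C, 1 => polarity C p' b
      | Box B, 0 => polarity B p' b
      | Neg B, 0 => polarity B p' (negb b)
      | And B _, 0 => polarity B p' b
      | And _ C, 1 => polarity C p' b
      | _, _ => b
      end
  end.

Lemma subf_nil F : subf F [] = Some F.
Proof. now destruct F. Qed.

(** Exhibit the conclusion occurrence computed by [corr]. *)
Ltac exhibit_corr :=
  do 4 eexists; split; [reflexivity|]; split; [eassumption|];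
  split; [simpl; rewrite ?subf_nil; reflexivity | reflexivity].

Lemma premise_corr (G D : list form) (r : rule) (ps : list sequent) (k : nat)
  (Gk Dk : list form) (s : bool) (n : nat) (F : form) :
  rule_premises G D r = Some ps -> side_ok G r -> nth_error ps k = Some (Gk, Dk) ->
  nth_error (if s then Gk else Dk) n = Some F ->
  exists s' n' p' F', corr G D r k s n [] = Some (s', n', p') /\
    nth_error (if s' then G else D) n' = Some F' /\
    subf F' p' = Some F /\ polarity F' p' s' = s.
Proof.
  intros Hr Hside Hk HF.
  destruct r; open_rule Hr;
    destruct k as [|[|[]]]; simpl in Hk; try discriminate; injection Hk as <- <-;
    destruct s; simpl in HF |- *;
    repeat match goal with
    | H : nth_error (rem _ _) _ = Some _ |- _ => rewrite nth_error_rem in H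
    | H : nth_error (_ ++ [_]) _ = Some _ |- _ =>
        apply nth_error_app_last in H as [[? H]|[? H]]; [|subst]
    | H : nth_error (_ :: _) ?m = Some _ |- _ => destruct m; simpl in H; [injection H as <-|]
    | H : nth_error [] ?m = Some _ |- _ => destruct m; discriminate
    end;
    try rewrite length_rem in * by (apply nth_error_Some; congruence);
    repeat match goal with
    | L : ?a < ?b |- context [?a <? ?b] => rewrite (proj2 (Nat.ltb_lt a b) L)
    | |- context [?a <? ?a] => rewrite Nat.ltb_irrefl
    end;
    try exhibit_corr.
  rewrite nth_error_map in HF.
  destruct (nth_error sel n) as [t|] eqn:Et; [injection HF as <- | discriminate].
  destruct Hside as [_ Hbox]. rewrite Forall_forall in Hbox.
  destruct (Hbox t (nth_error_In _ _ Et)) as [B EB].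
  rewrite (nth_error_nth sel n 0 Et), (nth_error_nth G t Bot EB). exhibit_corr.
Qed.

Lemma subf_app F p1 p2 G : subf F p1 = Some G -> subf F (p1 ++ p2) = subf G p2.
Proof.
  revert F. induction p1 as [|k p1 IH]; intros F H; simpl in *.
  - rewrite subf_nil in H. now injection H as ->.
  - destruct F; destruct k as [|[|k]]; simpl in *; try discriminate; auto.
Qed.

Lemma polarity_app F p1 p2 G b :
  subf F p1 = Some G -> polarity F (p1 ++ p2) b = polarity G p2 (polarity F p1 b).
Proof.
  revert F b. induction p1 as [|k p1 IH]; intros F b H; simpl in *.
  - rewrite subf_nil in H. now injection H as ->.
  - destruct F; destruct k as [|[|k]]; simpl in *; try discriminate; auto.
Qed.

Lemma corr_app G D r k s n q :
  corr G D r k s n q = match corr G D r k s n [] with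
                       | Some (s', n', p') => Some (s', n', p' ++ q) | None => None end.
Proof.
  destruct r; simpl;
  repeat match goal with |- context [match ?x with _ => _ end] => destruct x end; reflexivity.
Qed.

Lemma subproof_app pf a b : subproof pf (a ++ b) =
  match subproof pf a with Some q => subproof q b | None => None end.
Proof.
  revert pf. induction a as [|k a IH]; intros [G D r subs]; simpl; auto.
  destruct (nth_error subs k); auto.
Qed.

Lemma valid_subproof pf a q : valid pf -> subproof pf a = Some q -> valid q.
Proof.
  revert pf. induction a as [|k a IH]; intros pf Hv H; simpl in H.
  - now injection H as <-.
  - destruct pf as [G D r subs]. destruct (nth_error subs k) as [child|] eqn:E; try discriminate.
    inversion Hv as [? ? ? ? ? _ _ _ Hsubs]; subst.
    apply (IH child); auto. eapply Hsubs, nth_error_In; eauto.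
Qed.

Definition root_traced (pf : proof) (a : list nat) (s : bool) (n : nat) (F : form) : Prop :=
  exists (s0 : bool) (n0 : nat) (T : form) (rp : list nat),
    nth_error (if s0 then fst (concl pf) else snd (concl pf)) n0 = Some T /\
    subf T rp = Some F /\ polarity T rp s0 = s /\
    forall q B, subf F q = Some (Box B) ->
      same_family pf (a, s, n, q) ([], s0, n0, rp ++ q).

Lemma trace_to_root pf : valid pf ->
  forall a G D r subs, subproof pf a = Some (PNode G D r subs) ->
  forall (s : bool) n F, nth_error (if s then G else D) n = Some F -> root_traced pf a s n F.
Proof.
  intros Hv a. induction a as [|k a IH] using rev_ind; intros G D r subs Ha s n F HF.
  - injection Ha as ->. exists s, n, F, []. simpl.
    split; [exact HF|]. split; [apply subf_nil|]. split; [reflexivity|].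
    intros q B _. apply rst_refl.
  - rewrite subproof_app in Ha.
    destruct (subproof pf a) as [[G0 D0 r0 subs0]|] eqn:Ea; try discriminate.
    simpl in Ha. destruct (nth_error subs0 k) as [child|] eqn:Ek; try discriminate.
    injection Ha as ->.
    pose proof (valid_subproof _ _ _ Hv Ea) as Hv0.
    inversion Hv0 as [? ? ? ? ps Hr0 Hside0 Hconcl0]; subst.
    assert (Hk : nth_error (map concl subs0) k = Some (G, D)) by (now rewrite nth_error_map, Ek).
    destruct (premise_corr _ _ _ _ _ _ _ _ _ _ Hr0 Hside0 Hk HF)
      as [s' [n' [p' [F' [Hcorr [HF' [Hsub Hpol]]]]]]].
    destruct (IH _ _ _ _ eq_refl s' n' F' HF') as [s0 [n0 [T [rp [HT [HsubT [HpolT Hfam]]]]]]].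
    exists s0, n0, T, (rp ++ p'). split; [exact HT|].
    split; [now rewrite (subf_app _ _ _ _ HsubT)|].
    split; [now rewrite (polarity_app _ _ _ _ _ HsubT), HpolT|].
    intros q B HB. apply rst_trans with (a, s', n', p' ++ q).
    + apply rst_step. split; [|split].
      * exists B. unfold formula_at. rewrite subproof_app, Ea. simpl. now rewrite Ek, HF.
      * exists B. unfold formula_at. rewrite Ea, HF'. now rewrite (subf_app _ _ _ _ Hsub).
      * exists a, k, s, n, q, G0, D0, r0, subs0, s', n', (p' ++ q).
        repeat split; auto. now rewrite corr_app, Hcorr.
    + rewrite <- app_assoc. apply (Hfam _ B). now rewrite (subf_app _ _ _ _ Hsub).
Qed.

(** Enumerate all paths [rp] for which [H : subf F rp = Some _] can hold,
    [F] being a concrete formula. *)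
Ltac enumerate_paths H rp :=
  let k := fresh "k" in let rp' := fresh "rp" in
  destruct rp as [|k rp'];
  [ simpl in H; try discriminate
  | destruct k as [|[|k]]; simpl in H; try discriminate; enumerate_paths H rp' ].

(** The only positive □ of the target is the □P inside ¬□(P ∧ ¬□P). *)
Lemma target_positive_box P rp C :
  subf (target P) rp = Some (Box C) -> polarity (target P) rp false = false ->
  rp = [1;0;0;1;0].
Proof. intros H Hpol. enumerate_paths H rp. reflexivity. Qed.

(** The only boxed conjunction in the target is □(P ∧ ¬□P). *)
Lemma target_conj_box P rp X Y :
  subf (target P) rp = Some (Box (And X Y)) ->
  rp = [1;0] /\ X = Atom P /\ Y = Neg (Box (Atom P)).
Proof. intros H. enumerate_paths H rp. now injection H as <- <-. Qed.

Lemma trace_to_target P pf a G D r subs (s : bool) n F :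
  valid pf -> concl pf = ([], [target P]) ->
  subproof pf a = Some (PNode G D r subs) -> nth_error (if s then G else D) n = Some F ->
  exists rp, subf (target P) rp = Some F /\ polarity (target P) rp false = s /\
    forall q B, subf F q = Some (Box B) -> same_family pf (a, s, n, q) ([], false, 0, rp ++ q).
Proof.
  intros Hv Hc Ha HF.
  destruct (trace_to_root pf Hv a G D r subs Ha s n F HF)
    as [s0 [n0 [T [rp [HT Hrest]]]]].
  rewrite Hc in HT. destruct s0; simpl in HT; [now destruct n0|].
  destruct n0 as [|[]]; simpl in HT; try discriminate.
  injection HT as <-. now exists rp.
Qed.

(** An unclean (⊃□) step in a proof of the target yields a prehistoric cycle:
    its principal □ and the inner □P of the selected □(P ∧ ¬□P) both lie in
    the family of the positive □P of the target, so that family precedes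
    itself. *)
Lemma selected_conj_box_cycle P pf a G D j sel subs t X Y :
  valid pf -> concl pf = ([], [target P]) ->
  subproof pf a = Some (PNode G D (RBoxR j sel) subs) ->
  In t sel -> nth t G Bot = Box (And X Y) -> has_prehistoric_cycle pf.
Proof.
  intros Hv Hc Ha Ht Et.
  pose proof (valid_subproof _ _ _ Hv Ha) as Hv0.
  inversion Hv0 as [? ? ? ? ps Hr _ Hconcl]; subst.
  simpl in Hr. destruct (nth_error D j) as [[| | |C| |]|] eqn:HC; try discriminate.
  injection Hr as Hsubs.
  destruct subs as [|[Gc Dc rc sc] subs']; simpl in Hsubs; try discriminate.
  injection Hsubs as <- <- _.
  set (Sel := map (fun s => nth s G Bot) sel).
  destruct (In_nth_error _ _ Ht) as [kk Ekk].
  assert (Hchild : subproof pf (a ++ [0]) = Some (PNode Sel [C] rc sc))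
    by (now rewrite subproof_app, Ha).
  assert (Ekk' : nth_error Sel kk = Some (Box (And X Y)))
    by (unfold Sel; rewrite nth_error_map, Ekk; cbn; now rewrite Et).
  destruct (trace_to_target P pf _ _ _ _ _ true kk _ Hv Hc Hchild Ekk')
    as [rp2 [S2 [_ F2]]].
  destruct (target_conj_box _ _ _ _ S2) as [-> [-> ->]].
  destruct (trace_to_target P pf _ _ _ _ _ false j _ Hv Hc Ha HC) as [rp1 [S1 [P1 F1]]].
  rewrite (target_positive_box _ _ _ S1 P1) in F1.
  set (l := (a, false, j, @nil nat)).
  assert (Bl : is_box_occ pf l)
    by (exists C; unfold formula_at, l; rewrite Ha, HC; apply subf_nil).
  assert (Bl2 : is_box_occ pf (a ++ [0], true, kk, [0;1;0]))
    by (exists (Atom P); unfold formula_at; now rewrite Hchild, Ekk').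
  assert (Hfam : same_family pf l (a ++ [0], true, kk, [0;1;0])).
  { apply rst_trans with ([], false, 0, [1;0;0;1;0]).
    - apply (F1 [] C), subf_nil.
    - apply rst_sym, (F2 [0;1;0] (Atom P)). reflexivity. }
  exists l. split; [exact Bl|]. apply t_step. split; [exact Bl|]. split; [exact Bl|].
  exists a, j, sel, G, D, (PNode Sel [C] rc sc :: subs'), true, kk, [0;1;0].
  repeat split; auto. apply rst_refl.
Qed.

Lemma cycle_free_rules_clean P pf :
  valid pf -> concl pf = ([], [target P]) -> prehistoric_cycle_free pf -> rules_clean pf.
Proof.
  intros Hv Hc Hfree a G D r subs Ha. destruct r as [| | | | |j sel| | | |]; simpl; auto.
  intros t B Ht Et. destruct B; try reflexivity.
  exfalso. apply Hfree. eapply selected_conj_box_cycle; eauto.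
Qed.

Theorem mainTheorem10 : forall P : nat,
  ~ exists pf : proof,
      valid pf /\ concl pf = ([], [target P]) /\ prehistoric_cycle_free pf.
Proof.
  intros P [pf [Hv [Hc Hfree]]].
  pose proof (clean_proof_sound pf false Hv (cycle_free_rules_clean P pf Hv Hc Hfree)) as Hsat.
  rewrite Hc, target_refuted in Hsat. discriminate.
Qed.
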